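(* Let $M\in\mathbb N$ and let real numbers $Q_k,\hat Q_k$, $0\le k\le M$, be given. Let $\theta_n,\tilde\theta_n$ ($0\le n\le M$) be the unique reals such that $$\sum_{k\le M}Q_k\binom{h_k}{0}+\hat Q_k\binom{0}{\hat h_k}=\sum_{n\le M}\theta_n\binom{f_n}{g_n}+\tilde\theta_n\binom{\tilde f_n}{\tilde g_n}.$$ Then there are real coefficients $A_{n+2j,n},B_{n+2j,n},\tilde A_{n+2j,n},\tilde B_{n+2j,n}$ depending only on $p,q,\mu$ such that $$\theta_n=\sum_{j=0}^{[\frac{M-n}2]}A_{n+2j,n}Q_{n+2j}+B_{n+2j,n}\hat Q_{n+2j},\qquad \tilde\theta_n=\sum_{j=0}^{[\frac{M-n}2]}\tilde A_{n+2j,n}Q_{n+2j}+\tilde B_{n+2j,n}\hat Q_{n+2j},$$ and in particular $$A_{n,n}=\frac{q}{\Gamma(2pq+p+q)},\quad B_{n,n}=\frac{p}{\gamma(2pq+p+q)},\quad A_{n+2,n}=-\frac{\tilde e_{n+2,n}}{\Gamma\gamma(2pq+p+q)},\quad B_{n+2,n}=\frac{p+1}{q+1}\,\frac{\tilde e_{n+2,n}}{\gamma^2(2pq+p+q)},$$ where $\tilde e_{n+2,n}=(n+2)(n+1)\frac{pq\gamma(q+1)(1-\mu)}{3pq+p+q-1}$.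
   Context: One space dimension; $p,q>1$, $\mu>0$; $\Gamma,\gamma>0$ with $\gamma^p=\Gamma\frac{p+1}{pq-1}$, $\Gamma^q=\gamma\frac{q+1}{pq-1}$. $h_n(y)=\sum_{j\le n/2}\frac{n!}{(n-2j)!j!}(-1)^jy^{n-2j}$ and $\hat h_n(y)=\sum_{j\le n/2}\frac{n!}{(n-2j)!j!}(-1)^j\mu^jy^{n-2j}$. The pairs $(f_n,g_n)$ and $(\tilde f_n,\tilde g_n)$ are the polynomial eigenvectors of degree $n$ of $\mathscr H+\mathcal M$ (with $\mathscr H=\mathrm{diag}(\frac{d^2}{dy^2}-\frac y2\frac d{dy},\ \mu\frac{d^2}{dy^2}-\frac y2\frac d{dy})$ and $\mathcal M=\begin{pmatrix}-\frac{p+1}{pq-1}&p\gamma^{p-1}\\ q\Gamma^{q-1}&-\frac{q+1}{pq-1}\end{pmatrix}$) with eigenvalues $1-\frac n2$ and $-(\frac n2+\frac{(p+1)(q+1)}{pq-1})$ respectively, normalized so that the leading coefficients are $((p+1)\Gamma,(q+1)\gamma)$ and $(p\Gamma,-q\gamma)$ respectively; each is a combination of $\binom{h_{n-2j}}{0},\binom{0}{\hat h_{n-2j}}$, $0\le j\le n/2$. *)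

From Stdlib Require Import Reals Arith Factorial.
Open Scope R_scope.

Definition h (n : nat) (y : R) : R :=
  sum_f_R0 (fun j => INR (fact n) / (INR (fact (n - 2 * j)) * INR (fact j))
                      * (-1) ^ j * y ^ (n - 2 * j)) (n / 2).

Definition hh (mu : R) (n : nat) (y : R) : R :=
  sum_f_R0 (fun j => INR (fact n) / (INR (fact (n - 2 * j)) * INR (fact j))
                      * (-1) ^ j * mu ^ j * y ^ (n - 2 * j)) (n / 2).

Definition is_deriv (f f' : R -> R) : Prop :=
  forall y, derivable_pt_lim f y (f' y).

(* (f,g) is an eigenvector of H + M with eigenvalue lam, where
   H = diag(d^2/dy^2 - y/2 d/dy, mu d^2/dy^2 - y/2 d/dy) and
   M = [[-(p+1)/(pq-1), p gam^(p-1)], [q Gam^(q-1), -(q+1)/(pq-1)]] *)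
Definition eigenpair (p q mu Gam gam lam : R) (f g : R -> R) : Prop :=
  exists f1 f2 g1 g2 : R -> R,
    is_deriv f f1 /\ is_deriv f1 f2 /\ is_deriv g g1 /\ is_deriv g1 g2 /\
    forall y,
      f2 y - y / 2 * f1 y + (- ((p + 1) / (p * q - 1))) * f y
        + p * Rpower gam (p - 1) * g y = lam * f y /\
      mu * g2 y - y / 2 * g1 y + q * Rpower Gam (q - 1) * f y
        + (- ((q + 1) / (p * q - 1))) * g y = lam * g y.

Definition poly_deg_lead (f : R -> R) (n : nat) (a : R) : Prop :=
  exists c : nat -> R, c n = a /\
    forall y, f y = sum_f_R0 (fun k => c k * y ^ k) n.

Definition hcomb (mu : R) (n : nat) (f g : R -> R) : Prop :=
  exists a b : nat -> R, forall y,
    f y = sum_f_R0 (fun j => a j * h (n - 2 * j) y) (n / 2) /\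
    g y = sum_f_R0 (fun j => b j * hh mu (n - 2 * j) y) (n / 2).

Definition etilde (p q mu gam : R) (n : nat) : R :=
  (INR n + 2) * (INR n + 1) * (p * q * gam * (q + 1) * (1 - mu))
    / (3 * p * q + p + q - 1).

(* Both eigenvector families are triangular in the Hermite-type basis:
   (f_n, g_n) = sum_j (a_{n,j} h_{n-2j}, b_{n,j} hat h_{n-2j}), and similarly for
   (tilde f_n, tilde g_n) with coefficients a', b'.  The h_k (and the hat h_k) are linearly
   independent, h_k having degree k and leading coefficient 1, so comparing coefficients turns the
   identity into the block upper-triangular system
     (Q_k, hat Q_k) = sum_i L_{k+2i,i} (theta_{k+2i}, tilde theta_{k+2i}),
     L_{m,i} = [[a_{m,i}, a'_{m,i}], [b_{m,i}, b'_{m,i}]].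
   Its inverse is block upper-triangular too, with blocks K_{n,j} given by a recursion that does not
   involve M, and the four coefficients of index (n+2j, n) are the entries of K_{n,j}.  The diagonal
   blocks L_{m,0} = D all consist of the normalised leading coefficients, so K_{n,0} = D^{-1} and
   K_{n,1} = - D^{-1} L_{n+2,1} D^{-1}.  The entries a_{n+2,1}, b_{n+2,1}, a'_{n+2,1}, b'_{n+2,1} of
   L_{n+2,1} are read off the coefficient of y^n in the eigenvalue equation of degree n+2: a 2x2
   linear system whose determinant is nonzero because p, q > 1. *)

From Stdlib Require Import Reals Lra Lia Arith FunctionalExtensionality IndefiniteDescription.
Open Scope R_scope.

(** * Finite sums *)

Lemma sum_f_R0_mult_l (u : nat -> R) (x : R) (N : nat) :
  sum_f_R0 (fun i => x * u i) N = x * sum_f_R0 u N.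
Proof. rewrite scal_sum. apply sum_eq; intros; ring. Qed.

Lemma sum_f_R0_mult_r (u : nat -> R) (x : R) (N : nat) :
  sum_f_R0 (fun i => u i * x) N = sum_f_R0 u N * x.
Proof. rewrite <- scal_sum; ring. Qed.

Lemma sum_f_R0_swap (X : nat -> nat -> R) (I J : nat) :
  sum_f_R0 (fun i => sum_f_R0 (X i) J) I = sum_f_R0 (fun j => sum_f_R0 (fun i => X i j) I) J.
Proof.
  induction I as [|I IH]; simpl; [reflexivity|].
  rewrite IH, <- sum_plus. reflexivity.
Qed.

Lemma sum_f_R0_triangle_swap (Y : nat -> nat -> R) (N : nat) :
  sum_f_R0 (fun i => sum_f_R0 (Y i) (N - i)) N =
  sum_f_R0 (fun j => sum_f_R0 (fun i => Y i (j - i)%nat) j) N.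
Proof.
  induction N as [|N IH]; [reflexivity|].
  rewrite tech5, (tech5 (fun j => _)), <- IH, (tech5 (fun i => Y i _)), Nat.sub_diag.
  rewrite (sum_eq _ (fun i => sum_f_R0 (Y i) (N - i) + Y i (S N - i)%nat)), sum_plus.
  - simpl. ring.
  - intros i Hi. replace (S N - i)%nat with (S (N - i)) by lia. reflexivity.
Qed.

Lemma sum_f_R0_delta (M l : nat) (v : R) : (l <= M)%nat ->
  sum_f_R0 (fun k => if Nat.eqb k l then v else 0) M = v.
Proof.
  induction M as [|M IH]; intros Hl.
  - now replace l with 0%nat by lia.
  - rewrite tech5. destruct (Nat.eqb_spec (S M) l) as [<-|Hne].
    + rewrite sum_eq_R0; [ring|]. intros n Hn. destruct (Nat.eqb_spec n (S M)); [lia|reflexivity].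
    + rewrite IH by lia. ring.
Qed.

Lemma div2_succ (x : nat) :
  Nat.div2 (S x) = if Nat.even (S x) then S (Nat.div2 x) else Nat.div2 x.
Proof.
  pose proof (Nat.div2_odd x) as Hx; pose proof (Nat.div2_odd (S x)) as HSx.
  rewrite <- Nat.negb_odd, Nat.odd_succ, <- Nat.negb_odd in *.
  destruct (Nat.odd x); simpl in *; lia.
Qed.

Lemma even_double_div2 (x : nat) : Nat.even x = true -> (2 * Nat.div2 x)%nat = x.
Proof.
  pose proof (Nat.div2_odd x). rewrite <- Nat.negb_odd.
  destruct (Nat.odd x); simpl in *; [discriminate | lia].
Qed.

Lemma div2_le (x : nat) : (2 * Nat.div2 x <= x)%nat.
Proof. pose proof (Nat.div2_odd x). destruct (Nat.odd x); simpl in *; lia. Qed.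

Lemma div2_sub_double (x i : nat) : (2 * i <= x)%nat -> Nat.div2 (x - 2 * i) = (Nat.div2 x - i)%nat.
Proof.
  intro H. rewrite !Nat.div2_div.
  replace x with ((x - 2 * i) + i * 2)%nat at 2 by lia. rewrite Nat.div_add; lia.
Qed.

Definition even_part (W : nat -> R) (m k : nat) : R :=
  if Nat.even (m - k) then W (Nat.div2 (m - k)) else 0.

Lemma sum_div2_even_part (m : nat) : forall W : nat -> R,
  sum_f_R0 W (Nat.div2 m) = sum_f_R0 (even_part W m) m.
Proof.
  induction m as [m IH] using lt_wf_ind; intro W.
  destruct m as [|[|m]]; [unfold even_part; simpl; ring .. |].
  change (Nat.div2 (S (S m))) with (S (Nat.div2 m)).
  rewrite decomp_sum by apply Nat.lt_0_succ.
  rewrite !tech5, (IH m) by lia; simpl pred.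
  unfold even_part at 3 4; rewrite Nat.sub_diag.
  replace (S (S m) - S m)%nat with 1%nat by lia. simpl.
  rewrite (sum_eq (even_part W (S (S m))) (even_part (fun j => W (S j)) m)); [ring|].
  intros k Hk. unfold even_part. now replace (S (S m) - k)%nat with (S (S (m - k))) by lia.
Qed.

Lemma sum_div2_succ (x : nat) (Y : nat -> R) :
  sum_f_R0 Y (Nat.div2 (S x)) =
  sum_f_R0 Y (Nat.div2 x) + (if Nat.even (S x) then Y (Nat.div2 (S x)) else 0).
Proof.
  rewrite div2_succ at 1. destruct (Nat.even (S x)) eqn:E.
  - rewrite div2_succ, E. apply tech5.
  - ring.
Qed.

Lemma sum_diagonals (M : nat) (Z : nat -> nat -> R) :
  sum_f_R0 (fun n => sum_f_R0 (Z n) (Nat.div2 n)) M =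
  sum_f_R0 (fun k => sum_f_R0 (fun i => Z (k + 2 * i)%nat i) (Nat.div2 (M - k))) M.
Proof.
  induction M as [|M IH]; [reflexivity|].
  rewrite tech5, IH, (tech5 (fun k => _)), Nat.sub_diag, sum_div2_even_part, tech5.
  rewrite (sum_eq (fun k => sum_f_R0 _ (Nat.div2 (S M - k)))
      (fun k => sum_f_R0 (fun i => Z (k + 2 * i)%nat i) (Nat.div2 (M - k))
                + even_part (Z (S M)) (S M) k)).
  - rewrite sum_plus. unfold even_part at 2. rewrite Nat.sub_diag. simpl. rewrite Nat.add_0_r. ring.
  - intros k Hk. replace (S M - k)%nat with (S (M - k)) by lia.
    rewrite sum_div2_succ. unfold even_part. replace (S M - k)%nat with (S (M - k)) by lia.
    destruct (Nat.even (S (M - k))) eqn:E; [|reflexivity].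
    pose proof (even_double_div2 _ E). do 3 f_equal. lia.
Qed.

(** * Polynomial functions and their coefficients *)

Definition poly_at (c : nat -> R) (N : nat) (y : R) : R := sum_f_R0 (fun k => c k * y ^ k) N.

Definition deriv_coef (c : nat -> R) (k : nat) : R := INR (S k) * c (S k).

Lemma poly_at_plus (c d : nat -> R) (N : nat) (y : R) :
  poly_at (fun k => c k + d k) N y = poly_at c N y + poly_at d N y.
Proof. unfold poly_at. rewrite <- sum_plus. apply sum_eq; intros; ring. Qed.

Lemma poly_at_scal (a : R) (c : nat -> R) (N : nat) (y : R) :
  poly_at (fun k => a * c k) N y = a * poly_at c N y.
Proof. unfold poly_at. rewrite <- sum_f_R0_mult_l. apply sum_eq; intros; ring. Qed.

Lemma poly_at_sum (w : nat -> R) (cs : nat -> nat -> R) (J N : nat) (y : R) :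
  sum_f_R0 (fun j => w j * poly_at (cs j) N y) J =
  poly_at (fun k => sum_f_R0 (fun j => w j * cs j k) J) N y.
Proof.
  unfold poly_at. rewrite (sum_eq _ (fun j => sum_f_R0 (fun k => w j * cs j k * y ^ k) N)).
  - rewrite sum_f_R0_swap. apply sum_eq; intros. apply sum_f_R0_mult_r.
  - intros j _. rewrite <- sum_f_R0_mult_l. apply sum_eq; intros; ring.
Qed.

Lemma poly_at_pad (c : nat -> R) (m N : nat) (y : R) :
  (forall k, (m < k)%nat -> c k = 0) -> (m <= N)%nat -> poly_at c N y = poly_at c m y.
Proof.
  intros Hc HN. induction N as [|N IH].
  - now replace m with 0%nat by lia.
  - destruct (Nat.eq_dec m (S N)) as [->|Hne]; [reflexivity|].
    unfold poly_at in *. rewrite tech5, IH, Hc by lia. ring.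
Qed.

Lemma poly_at_mul_X_deriv (c : nat -> R) (N : nat) (y : R) : (forall k, (N < k)%nat -> c k = 0) ->
  y * poly_at (deriv_coef c) N y = poly_at (fun k => INR k * c k) N y.
Proof.
  intro Hc.
  rewrite <- (poly_at_pad (fun k => INR k * c k) N (S N));
    [| intros k Hk; rewrite Hc by lia; ring | lia].
  unfold poly_at. rewrite (decomp_sum (fun k => INR k * c k * y ^ k)), <- sum_f_R0_mult_l by lia. simpl.
  rewrite <- (Rplus_0_l (sum_f_R0 _ N)) at 1. f_equal; [ring|].
  apply sum_eq; intros; unfold deriv_coef; simpl; ring.
Qed.

Lemma derivable_pt_lim_poly_at (c : nat -> R) (N : nat) (y : R) :
  derivable_pt_lim (poly_at c (S N)) y (poly_at (deriv_coef c) N y).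
Proof.
  induction N as [|N IH]; unfold poly_at in *.
  - replace (sum_f_R0 _ 0) with (INR 1 * c 1%nat) by (unfold deriv_coef; simpl; ring).
    apply (derivable_pt_lim_ext (fun z => c 0%nat + c 1%nat * z)); [intro; simpl; ring|].
    replace (INR 1 * c 1%nat) with (0 + c 1%nat * 1) by (simpl; ring).
    apply derivable_pt_lim_plus; [apply derivable_pt_lim_const|].
    apply derivable_pt_lim_scal, derivable_pt_lim_id.
  - apply (derivable_pt_lim_ext
             (fun z => sum_f_R0 (fun k => c k * z ^ k) (S N) + c (S (S N)) * z ^ S (S N)));
      [intro; symmetry; apply tech5|].
    rewrite tech5. apply derivable_pt_lim_plus; [exact IH|].
    replace (deriv_coef c (S N) * y ^ S N) with (c (S (S N)) * (INR (S (S N)) * y ^ pred (S (S N))))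
      by (unfold deriv_coef; simpl; ring).
    apply derivable_pt_lim_scal, derivable_pt_lim_pow.
Qed.

Lemma poly_at_eq0 (N : nat) : forall c : nat -> R,
  (forall y, poly_at c N y = 0) -> forall k, (k <= N)%nat -> c k = 0.
Proof.
  induction N as [|N IH]; intros c Hc k Hk.
  - replace k with 0%nat by lia. specialize (Hc 0). unfold poly_at in Hc; simpl in Hc. lra.
  - destruct k as [|k].
    + specialize (Hc 0). unfold poly_at in Hc. rewrite decomp_sum, sum_eq_R0 in Hc by
        (lia || (intros; simpl; ring)). simpl in Hc; lra.
    + assert (Hd : forall y, poly_at (deriv_coef c) N y = 0).
      { intro y. apply (uniqueness_limite (poly_at c (S N)) y); [apply derivable_pt_lim_poly_at|].
        apply (derivable_pt_lim_ext (fct_cte 0)); [intro; now rewrite Hc|].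
        apply derivable_pt_lim_const. }
      specialize (IH _ Hd k ltac:(lia)). unfold deriv_coef in IH.
      apply Rmult_integral in IH as [H|H]; [|exact H].
      now apply not_0_INR in H.
Qed.

Lemma poly_at_coef_unique (c d : nat -> R) (N : nat) :
  (forall y, poly_at c N y = poly_at d N y) -> forall k, (k <= N)%nat -> c k = d k.
Proof.
  intros H k Hk.
  assert (Hdiff : c k + -1 * d k = 0).
  { apply (poly_at_eq0 N (fun k => c k + -1 * d k)); [|exact Hk].
    intro y. rewrite poly_at_plus, poly_at_scal, H. ring. }
  lra.
Qed.

Lemma deriv_coef_vanish (c : nat -> R) (N : nat) :
  (forall k, (N < k)%nat -> c k = 0) -> forall k, (N < k)%nat -> deriv_coef c k = 0.
Proof. intros Hc k Hk. unfold deriv_coef. rewrite Hc by lia. ring. Qed.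

Lemma is_deriv_poly_at (F F1 : R -> R) (c : nat -> R) (N : nat) :
  (forall k, (N < k)%nat -> c k = 0) -> (forall y, F y = poly_at c N y) ->
  is_deriv F F1 -> forall y, F1 y = poly_at (deriv_coef c) N y.
Proof.
  intros Hc HF HF1 y. apply (uniqueness_limite F y); [apply HF1|].
  apply (derivable_pt_lim_ext (poly_at c (S N))); [|apply derivable_pt_lim_poly_at].
  intro z. rewrite HF. apply poly_at_pad; auto.
Qed.

Lemma eigenpair_coef (p q mu Gam gam lam : R) (F G : R -> R) (c d : nat -> R) (N : nat) :
  (forall k, (N < k)%nat -> c k = 0) -> (forall k, (N < k)%nat -> d k = 0) ->
  (forall y, F y = poly_at c N y) -> (forall y, G y = poly_at d N y) ->
  eigenpair p q mu Gam gam lam F G ->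
  forall k, (k <= N)%nat ->
    INR (S (S k)) * INR (S k) * c (S (S k)) - INR k / 2 * c k
      - (p + 1) / (p * q - 1) * c k + p * Rpower gam (p - 1) * d k = lam * c k /\
    mu * (INR (S (S k)) * INR (S k) * d (S (S k))) - INR k / 2 * d k
      + q * Rpower Gam (q - 1) * c k - (q + 1) / (p * q - 1) * d k = lam * d k.
Proof.
  intros Hc Hd HF HG [f1 [f2 [g1 [g2 [Df1 [Df2 [Dg1 [Dg2 Heq]]]]]]]] k Hk.
  pose proof (deriv_coef_vanish _ _ Hc) as Hc1.
  pose proof (deriv_coef_vanish _ _ Hd) as Hd1.
  pose proof (is_deriv_poly_at _ _ _ _ Hc HF Df1) as Hf1.
  pose proof (is_deriv_poly_at _ _ _ _ Hc1 Hf1 Df2) as Hf2.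
  pose proof (is_deriv_poly_at _ _ _ _ Hd HG Dg1) as Hg1.
  pose proof (is_deriv_poly_at _ _ _ _ Hd1 Hg1 Dg2) as Hg2.
  split.
  - assert (E : forall y, poly_at (fun k => deriv_coef (deriv_coef c) k + (-/2) * (INR k * c k)
                   + (- ((p + 1) / (p * q - 1))) * c k + p * Rpower gam (p - 1) * d k
                   + (- lam) * c k) N y = 0).
    { intro y. rewrite !poly_at_plus, !poly_at_scal, <- poly_at_mul_X_deriv, <- Hf2, <- Hf1, <- HF, <- HG
        by exact Hc.
      destruct (Heq y) as [E _]. lra. }
    pose proof (poly_at_eq0 N _ E k Hk) as Ek. unfold deriv_coef in Ek. cbv beta in Ek. lra.
  - assert (E : forall y, poly_at (fun k => mu * deriv_coef (deriv_coef d) k + (-/2) * (INR k * d k)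
                   + q * Rpower Gam (q - 1) * c k + (- ((q + 1) / (p * q - 1))) * d k
                   + (- lam) * d k) N y = 0).
    { intro y. rewrite !poly_at_plus, !poly_at_scal, <- poly_at_mul_X_deriv, <- Hg2, <- Hg1, <- HF, <- HG
        by exact Hd.
      destruct (Heq y) as [_ E]. lra. }
    pose proof (poly_at_eq0 N _ E k Hk) as Ek. unfold deriv_coef in Ek. cbv beta in Ek. lra.
Qed.

(** * The Hermite-type polynomials [hh s n] *)

Definition hh_coef (s : R) (m k : nat) : R :=
  if (Nat.leb k m && Nat.even (m - k))%bool then
    INR (fact m) / (INR (fact k) * INR (fact (Nat.div2 (m - k))))
      * (-1) ^ Nat.div2 (m - k) * s ^ Nat.div2 (m - k)
  else 0.

Lemma hh_poly_at (s : R) (m : nat) (y : R) : hh s m y = poly_at (hh_coef s m) m y.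
Proof.
  unfold hh, poly_at. rewrite <- Nat.div2_div, sum_div2_even_part.
  apply sum_eq. intros k Hk. unfold even_part, hh_coef.
  rewrite (proj2 (Nat.leb_le k m) Hk). cbn [andb].
  destruct (Nat.even (m - k)) eqn:E; [|ring].
  pose proof (even_double_div2 _ E).
  replace (m - 2 * Nat.div2 (m - k))%nat with k by lia. ring.
Qed.

Lemma hh_coef_gt (s : R) (m k : nat) : (m < k)%nat -> hh_coef s m k = 0.
Proof. intro H. unfold hh_coef. destruct (Nat.leb_spec k m); [lia|reflexivity]. Qed.

Lemma hh_coef_diag (s : R) (m : nat) : hh_coef s m m = 1.
Proof.
  unfold hh_coef. rewrite Nat.leb_refl, Nat.sub_diag. simpl.
  field. apply INR_fact_neq_0.
Qed.

Lemma hh_coef_sub2 (s : R) (n : nat) : hh_coef s (S (S n)) n = - (INR (S (S n)) * INR (S n)) * s.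
Proof.
  unfold hh_coef. rewrite (proj2 (Nat.leb_le n (S (S n)))) by lia.
  replace (S (S n) - n)%nat with 2%nat by lia. simpl andb; simpl Nat.div2.
  change (fact (S (S n))) with (S (S n) * (S n * fact n))%nat.
  rewrite !mult_INR. simpl (fact 1). simpl pow. change (INR 1) with 1.
  field. apply INR_fact_neq_0.
Qed.

Lemma hh_poly_at_pad (s : R) (m N : nat) (y : R) :
  (m <= N)%nat -> hh s m y = poly_at (hh_coef s m) N y.
Proof.
  intro H. rewrite hh_poly_at. symmetry. apply poly_at_pad; auto. intros; now apply hh_coef_gt.
Qed.

Lemma h_eq_hh (n : nat) (y : R) : h n y = hh 1 n y.
Proof. unfold h, hh. apply sum_eq. intros. rewrite pow1. ring. Qed.

Lemma hh_lin_indep (s : R) (M : nat) (D : nat -> R) :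
  (forall y, sum_f_R0 (fun k => D k * hh s k y) M = 0) -> forall k, (k <= M)%nat -> D k = 0.
Proof.
  induction M as [|M IH]; intros HD k Hk.
  - replace k with 0%nat in * by lia. specialize (HD 0). simpl in HD.
    rewrite hh_poly_at in HD. unfold poly_at in HD. simpl in HD. rewrite hh_coef_diag in HD. lra.
  - assert (Htop : D (S M) = 0).
    { assert (Hcoef : forall y,
        poly_at (fun l => sum_f_R0 (fun k => D k * hh_coef s k l) (S M)) (S M) y = 0).
      { intro y. rewrite <- poly_at_sum, <- (HD y). apply sum_eq. intros j Hj.
        now rewrite (hh_poly_at_pad s j (S M)). }
      rewrite <- (poly_at_eq0 _ _ Hcoef (S M)) by lia.
      rewrite tech5, hh_coef_diag, sum_eq_R0; [ring|].
      intros j Hj. rewrite hh_coef_gt by lia. ring. }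
    destruct (Nat.eq_dec k (S M)) as [->|Hne]; [exact Htop|].
    apply IH; [|lia]. intro y. rewrite <- (HD y), tech5, Htop. ring.
Qed.

Definition hh_comb_coef (s : R) (a : nat -> R) (n k : nat) : R :=
  sum_f_R0 (fun j => a j * hh_coef s (n - 2 * j) k) (Nat.div2 n).

Lemma hh_comb_poly_at (s : R) (a : nat -> R) (n : nat) (y : R) :
  sum_f_R0 (fun j => a j * hh s (n - 2 * j) y) (Nat.div2 n) = poly_at (hh_comb_coef s a n) n y.
Proof.
  unfold hh_comb_coef. rewrite <- poly_at_sum. apply sum_eq. intros.
  rewrite (hh_poly_at_pad s _ n); auto; lia.
Qed.

Lemma hh_comb_coef_gt (s : R) (a : nat -> R) (n k : nat) : (n < k)%nat -> hh_comb_coef s a n k = 0.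
Proof. intro H. apply sum_eq_R0. intros. rewrite hh_coef_gt by lia. ring. Qed.

Lemma hh_comb_coef_top (s : R) (a : nat -> R) (n : nat) : hh_comb_coef s a n n = a 0%nat.
Proof.
  unfold hh_comb_coef. rewrite (sum_eq _ (fun j => if Nat.eqb j 0 then a 0%nat else 0)).
  - apply sum_f_R0_delta, Nat.le_0_l.
  - intros j Hj. pose proof (div2_le n). destruct (Nat.eqb_spec j 0) as [->|Hne].
    + rewrite Nat.sub_0_r, hh_coef_diag. ring.
    + rewrite hh_coef_gt by lia. ring.
Qed.

Lemma hh_comb_coef_sub2 (s : R) (a : nat -> R) (n : nat) :
  hh_comb_coef s a (S (S n)) n = a 1%nat - INR (S (S n)) * INR (S n) * s * a 0%nat.
Proof.
  unfold hh_comb_coef.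
  rewrite (sum_eq _ (fun j => (if Nat.eqb j 0 then - (INR (S (S n)) * INR (S n) * s * a 0%nat) else 0)
                              + (if Nat.eqb j 1 then a 1%nat else 0))).
  - change (Nat.div2 (S (S n))) with (S (Nat.div2 n)).
    rewrite sum_plus, !sum_f_R0_delta by (generalize (Nat.div2 n); lia). ring.
  - intros j Hj. pose proof (div2_le (S (S n))).
    destruct (Nat.eqb_spec j 0) as [->|H0]; [|destruct (Nat.eqb_spec j 1) as [->|H1]].
    + rewrite Nat.sub_0_r, hh_coef_sub2. cbv [Nat.eqb]. ring.
    + replace (S (S n) - 2 * 1)%nat with n by lia. rewrite hh_coef_diag. ring.
    + rewrite hh_coef_gt by lia. ring.
Qed.

Lemma hh_expansion_coef (s : R) (a a' : nat -> nat -> R) (F F' : nat -> R -> R) (M : nat)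
  (Q th tht : nat -> R) :
  (forall n y, F n y = sum_f_R0 (fun j => a n j * hh s (n - 2 * j) y) (Nat.div2 n)) ->
  (forall n y, F' n y = sum_f_R0 (fun j => a' n j * hh s (n - 2 * j) y) (Nat.div2 n)) ->
  (forall y, sum_f_R0 (fun k => Q k * hh s k y) M
             = sum_f_R0 (fun n => th n * F n y + tht n * F' n y) M) ->
  forall k, (k <= M)%nat ->
    Q k = sum_f_R0 (fun i => a (k + 2 * i)%nat i * th (k + 2 * i)%nat
                             + a' (k + 2 * i)%nat i * tht (k + 2 * i)%nat) (Nat.div2 (M - k)).
Proof.
  intros HF HF' H.
  set (P := fun k => sum_f_R0 (fun i => a (k + 2 * i)%nat i * th (k + 2 * i)%nat
                                 + a' (k + 2 * i)%nat i * tht (k + 2 * i)%nat) (Nat.div2 (M - k))).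
  assert (HP : forall y, sum_f_R0 (fun n => th n * F n y + tht n * F' n y) M
                         = sum_f_R0 (fun k => P k * hh s k y) M).
  { intro y.
    rewrite (sum_eq _ (fun n => sum_f_R0 (fun j => (a n j * th n + a' n j * tht n) * hh s (n - 2 * j) y)
                                         (Nat.div2 n))).
    - rewrite sum_diagonals. apply sum_eq. intros k Hk. unfold P. rewrite <- sum_f_R0_mult_r.
      apply sum_eq. intros i Hi. now replace (k + 2 * i - 2 * i)%nat with k by lia.
    - intros n Hn. rewrite HF, HF', <- !sum_f_R0_mult_l, <- sum_plus. apply sum_eq. intros; ring. }
  intros k Hk. apply Rminus_diag_uniq.
  apply (hh_lin_indep s M (fun k => Q k - P k)); [|exact Hk].
  intro y. rewrite (sum_eq _ (fun k => Q k * hh s k y - P k * hh s k y)) by (intros; ring).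
  rewrite minus_sum, <- HP, <- H. ring.
Qed.

Definition hh_expansions (mu : R) (F G : nat -> R -> R) (a b : nat -> nat -> R) : Prop :=
  forall n y, F n y = sum_f_R0 (fun j => a n j * hh 1 (n - 2 * j) y) (Nat.div2 n) /\
              G n y = sum_f_R0 (fun j => b n j * hh mu (n - 2 * j) y) (Nat.div2 n).

(** * Block upper-triangular systems *)

Record mat2 := Mat2 { m11 : R; m12 : R; m21 : R; m22 : R }.

Definition mat2_mul (X Y : mat2) : mat2 :=
  Mat2 (m11 X * m11 Y + m12 X * m21 Y) (m11 X * m12 Y + m12 X * m22 Y)
       (m21 X * m11 Y + m22 X * m21 Y) (m21 X * m12 Y + m22 X * m22 Y).

Definition mat2_opp (X : mat2) : mat2 := Mat2 (- m11 X) (- m12 X) (- m21 X) (- m22 X).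

Definition mat2_det (X : mat2) : R := m11 X * m22 X - m12 X * m21 X.

Definition mat2_inv (X : mat2) : mat2 :=
  Mat2 (m22 X / mat2_det X) (- m12 X / mat2_det X) (- m21 X / mat2_det X) (m11 X / mat2_det X).

Definition mat2_sum (F : nat -> mat2) (N : nat) : mat2 :=
  Mat2 (sum_f_R0 (fun i => m11 (F i)) N) (sum_f_R0 (fun i => m12 (F i)) N)
       (sum_f_R0 (fun i => m21 (F i)) N) (sum_f_R0 (fun i => m22 (F i)) N).

Definition mat2_app (X : mat2) (u : R * R) : R * R :=
  (m11 X * fst u + m12 X * snd u, m21 X * fst u + m22 X * snd u).

Definition vec2_add (u u' : R * R) : R * R := (fst u + fst u', snd u + snd u').

Definition vec2_sum (F : nat -> R * R) (N : nat) : R * R :=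
  (sum_f_R0 (fun i => fst (F i)) N, sum_f_R0 (fun i => snd (F i)) N).

Lemma vec2_sum_0 (F : nat -> R * R) : vec2_sum F 0 = F 0%nat.
Proof. unfold vec2_sum. simpl. now destruct (F 0%nat). Qed.

Lemma vec2_sum_S (F : nat -> R * R) (N : nat) :
  vec2_sum F (S N) = vec2_add (F 0%nat) (vec2_sum (fun i => F (S i)) N).
Proof. unfold vec2_sum, vec2_add. rewrite !(decomp_sum _ (S N)) by lia. reflexivity. Qed.

Lemma vec2_sum_ext (F G : nat -> R * R) (N : nat) :
  (forall i, (i <= N)%nat -> F i = G i) -> vec2_sum F N = vec2_sum G N.
Proof. intro H. unfold vec2_sum. f_equal; apply sum_eq; intros i Hi; now rewrite H. Qed.

Lemma vec2_sum_triangle_swap (Y : nat -> nat -> R * R) (N : nat) :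
  vec2_sum (fun i => vec2_sum (Y i) (N - i)) N =
  vec2_sum (fun j => vec2_sum (fun i => Y i (j - i)%nat) j) N.
Proof. unfold vec2_sum. simpl. f_equal; apply sum_f_R0_triangle_swap. Qed.

Lemma mat2_app_vec2_sum (X : mat2) (F : nat -> R * R) (N : nat) :
  mat2_app X (vec2_sum F N) = vec2_sum (fun i => mat2_app X (F i)) N.
Proof.
  unfold mat2_app, vec2_sum. simpl.
  f_equal; rewrite <- !sum_f_R0_mult_l, <- sum_plus; apply sum_eq; intros; ring.
Qed.

Lemma vec2_sum_mat2_app (F : nat -> mat2) (u : R * R) (N : nat) :
  vec2_sum (fun i => mat2_app (F i) u) N = mat2_app (mat2_sum F N) u.
Proof.
  unfold mat2_app, vec2_sum, mat2_sum. simpl.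
  f_equal; rewrite <- !sum_f_R0_mult_r, <- sum_plus; apply sum_eq; intros; ring.
Qed.

Lemma mat2_app_mul (X Y : mat2) (u : R * R) :
  mat2_app (mat2_mul X Y) u = mat2_app X (mat2_app Y u).
Proof. unfold mat2_app, mat2_mul. simpl. f_equal; ring. Qed.

Lemma mat2_app_inv_l (X : mat2) (u : R * R) :
  mat2_det X <> 0 -> mat2_app (mat2_inv X) (mat2_app X u) = u.
Proof.
  intro H. destruct X as [a b c d], u as [x y]. unfold mat2_det in H.
  unfold mat2_app, mat2_inv, mat2_det. simpl. f_equal; field; exact H.
Qed.

Lemma mat2_solve (X : mat2) (u w t : R * R) :
  mat2_det X <> 0 -> w = vec2_add (mat2_app X u) t ->
  u = vec2_add (mat2_app (mat2_inv X) w) (mat2_app (mat2_opp (mat2_inv X)) t).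
Proof.
  intros H ->. destruct X as [a b c d], u as [x y], t as [t1 t2]. unfold mat2_det in H.
  unfold vec2_add, mat2_app, mat2_opp, mat2_inv, mat2_det. simpl. f_equal; field; exact H.
Qed.

Section BlockTriangularInverse.

Variable L : nat -> nat -> mat2.

(* [trinv n j] is the block of the inverse system sending w_{n+2j} to v_n: solving the n-th equation
   w_n = L n 0 v_n + sum_{i >= 1} L (n+2i) i v_{n+2i} for v_n gives the recursion [trinv_S].  Since its
   step j+1 uses all blocks [trinv _ (j - i)], [trinv_upto j] tabulates the blocks of index at most j. *)
Fixpoint trinv_upto (j n l : nat) : mat2 :=
  match j with
  | O => mat2_inv (L n 0%nat)
  | S j' =>
      if Nat.leb l j' then trinv_upto j' n l
      else mat2_mul (mat2_opp (mat2_inv (L n 0%nat)))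
             (mat2_sum (fun i => mat2_mul (L (n + 2 * S i) (S i))
                                          (trinv_upto j' (n + 2 * S i) (j' - i))) j')
  end.

Definition trinv (n j : nat) : mat2 := trinv_upto j n j.

Lemma trinv_upto_trinv (j n l : nat) : (l <= j)%nat -> trinv_upto j n l = trinv n l.
Proof.
  induction j as [|j IH]; intro Hl.
  - now replace l with 0%nat by lia.
  - destruct (Nat.leb_spec l j) as [Hlj|Hjl].
    + cbn [trinv_upto]. rewrite (proj2 (Nat.leb_le _ _) Hlj). now apply IH.
    + now replace l with (S j) by lia.
Qed.

Lemma trinv_S (n j : nat) :
  trinv n (S j) = mat2_mul (mat2_opp (mat2_inv (L n 0%nat)))
    (mat2_sum (fun i => mat2_mul (L (n + 2 * S i) (S i)) (trinv (n + 2 * S i) (j - i))) j).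
Proof.
  unfold trinv at 1. cbn [trinv_upto]. rewrite (proj2 (Nat.leb_gt _ _)) by lia.
  do 2 f_equal. apply functional_extensionality. intro i.
  rewrite trinv_upto_trinv by lia. reflexivity.
Qed.

Lemma trinv_1 (n : nat) :
  trinv n 1 = mat2_mul (mat2_opp (mat2_inv (L n 0%nat)))
                       (mat2_mul (L (n + 2)%nat 1%nat) (mat2_inv (L (n + 2)%nat 0%nat))).
Proof. rewrite trinv_S. unfold mat2_sum. simpl. now destruct (mat2_mul _ _). Qed.

Hypothesis L_diag_invertible : forall m, mat2_det (L m 0%nat) <> 0.

Lemma trinv_solves (M : nat) (v w : nat -> R * R) :
  (forall k, (k <= M)%nat ->
     w k = vec2_sum (fun i => mat2_app (L (k + 2 * i) i) (v (k + 2 * i)%nat)) (Nat.div2 (M - k))) ->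
  forall n, (n <= M)%nat ->
    v n = vec2_sum (fun j => mat2_app (trinv n j) (w (n + 2 * j)%nat)) (Nat.div2 (M - n)).
Proof.
  intro Hw.
  enough (Hd : forall d n, (M - n)%nat = d -> (n <= M)%nat ->
    v n = vec2_sum (fun j => mat2_app (trinv n j) (w (n + 2 * j)%nat)) (Nat.div2 (M - n)))
    by (intros n Hn; exact (Hd _ n eq_refl Hn)).
  induction d as [d IH] using lt_wf_ind. intros n Hd Hn.
  pose proof (Hw n Hn) as Hwn. pose proof (div2_le (M - n)) as Hle.
  destruct (Nat.div2 (M - n)) as [|J] eqn:EJ.
  - rewrite vec2_sum_0, Nat.add_0_r in *. rewrite Hwn. symmetry. now apply mat2_app_inv_l.
  - rewrite vec2_sum_S, !Nat.add_0_r in *.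
    set (T := vec2_sum (fun i => mat2_app (L (n + 2 * S i) (S i)) (v (n + 2 * S i)%nat)) J) in Hwn.
    assert (Htail : vec2_sum (fun j => mat2_app (trinv n (S j)) (w (n + 2 * S j)%nat)) J
                    = mat2_app (mat2_opp (mat2_inv (L n 0%nat))) T).
    { rewrite (vec2_sum_ext _ (fun j => mat2_app (mat2_opp (mat2_inv (L n 0%nat)))
          (mat2_app (mat2_sum (fun i => mat2_mul (L (n + 2 * S i) (S i))
                                                 (trinv (n + 2 * S i) (j - i))) j)
                    (w (n + 2 * S j)%nat))))
        by (intros; now rewrite trinv_S, mat2_app_mul).
      rewrite <- mat2_app_vec2_sum. f_equal. unfold T.
      rewrite (vec2_sum_ext (fun i => mat2_app (L (n + 2 * S i) (S i)) (v (n + 2 * S i)%nat))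
                            (fun i => vec2_sum (fun l => mat2_app (mat2_mul (L (n + 2 * S i) (S i))
          (trinv (n + 2 * S i) l)) (w (n + 2 * S i + 2 * l)%nat)) (J - i))).
      2:{ intros i Hi.
          assert (Hdiv : Nat.div2 (M - (n + 2 * S i)) = (J - i)%nat).
          { replace (M - (n + 2 * S i))%nat with ((M - n) - 2 * S i)%nat by lia.
            rewrite div2_sub_double, EJ by lia. lia. }
          rewrite (IH (M - (n + 2 * S i))%nat ltac:(lia) (n + 2 * S i)%nat eq_refl ltac:(lia)).
          rewrite Hdiv, mat2_app_vec2_sum. apply vec2_sum_ext. intros. now rewrite mat2_app_mul. }
      rewrite vec2_sum_triangle_swap. apply vec2_sum_ext. intros j Hj.
      rewrite <- vec2_sum_mat2_app. apply vec2_sum_ext. intros i Hi.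
      now replace (n + 2 * S i + 2 * (j - i))%nat with (n + 2 * S j)%nat by lia. }
    rewrite Htail. apply mat2_solve; auto.
Qed.

End BlockTriangularInverse.

(** * The subleading coefficients of the eigenvectors *)

Lemma Rpower_pred (x a : R) : 0 < x -> Rpower x (a - 1) = Rpower x a / x.
Proof.
  intro Hx. replace (Rpower x a) with (Rpower x ((a - 1) + 1)) by (f_equal; ring).
  rewrite Rpower_plus, Rpower_1 by exact Hx. field. lra.
Qed.

Lemma linear2_unique (c11 c12 c21 c22 x z x' z' : R) :
  c11 * c22 - c12 * c21 <> 0 ->
  c11 * x + c12 * z = c11 * x' + c12 * z' -> c21 * x + c22 * z = c21 * x' + c22 * z' ->
  x = x' /\ z = z'.
Proof.
  intros Hdet E1 E2.
  assert (Hx : (c11 * c22 - c12 * c21) * (x - x') = 0).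
  { replace ((c11 * c22 - c12 * c21) * (x - x'))
      with (c22 * ((c11 * x + c12 * z) - (c11 * x' + c12 * z'))
            - c12 * ((c21 * x + c22 * z) - (c21 * x' + c22 * z'))) by ring.
    rewrite E1, E2. ring. }
  assert (Hz : (c11 * c22 - c12 * c21) * (z - z') = 0).
  { replace ((c11 * c22 - c12 * c21) * (z - z'))
      with (c11 * ((c21 * x + c22 * z) - (c21 * x' + c22 * z'))
            - c21 * ((c11 * x + c12 * z) - (c11 * x' + c12 * z'))) by ring.
    rewrite E1, E2. ring. }
  apply Rmult_integral in Hx as [Hx|Hx]; [contradiction|].
  apply Rmult_integral in Hz as [Hz|Hz]; [contradiction|].
  split; lra.
Qed.

(* The coefficients of y^n in the eigenvalue equation for the pair
   F = sum_j a_j h_{n+2-2j}, G = sum_j b_j hat h_{n+2-2j}, with r = n: the y^{n+2} and y^n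
   coefficients of F are a0 and a1 - (n+2)(n+1) a0, those of G are b0 and b1 - (n+2)(n+1) mu b0. *)
Definition subleading_eqs (p q mu Gam gam lam r a0 b0 a1 b1 : R) : Prop :=
  (r + 2) * (r + 1) * a0
    - (r / 2 + (p + 1) / (p * q - 1) + lam) * (a1 - (r + 2) * (r + 1) * a0)
    + p * Rpower gam (p - 1) * (b1 - (r + 2) * (r + 1) * mu * b0) = 0 /\
  mu * ((r + 2) * (r + 1) * b0)
    + q * Rpower Gam (q - 1) * (a1 - (r + 2) * (r + 1) * a0)
    - (r / 2 + (q + 1) / (p * q - 1) + lam) * (b1 - (r + 2) * (r + 1) * mu * b0) = 0.

Lemma eigenpair_hh_subleading (p q mu Gam gam lam : R) (F G : nat -> R -> R) (a b : nat -> nat -> R)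
  (n : nat) :
  hh_expansions mu F G a b -> eigenpair p q mu Gam gam lam (F (S (S n))) (G (S (S n))) ->
  subleading_eqs p q mu Gam gam lam (INR n) (a (S (S n)) 0%nat) (b (S (S n)) 0%nat)
                                     (a (S (S n)) 1%nat) (b (S (S n)) 1%nat).
Proof.
  intros Hexp Heig.
  assert (HFc : forall y, F (S (S n)) y = poly_at (hh_comb_coef 1 (a (S (S n))) (S (S n))) (S (S n)) y)
    by (intro; rewrite (proj1 (Hexp _ _)); apply hh_comb_poly_at).
  assert (HGc : forall y, G (S (S n)) y = poly_at (hh_comb_coef mu (b (S (S n))) (S (S n))) (S (S n)) y)
    by (intro; rewrite (proj2 (Hexp _ _)); apply hh_comb_poly_at).
  destruct (eigenpair_coef _ _ _ _ _ _ _ _ _ _ (S (S n)) (hh_comb_coef_gt 1 _ _)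
              (hh_comb_coef_gt mu _ _) HFc HGc Heig n ltac:(lia)) as [E1 E2].
  rewrite !hh_comb_coef_top, !hh_comb_coef_sub2, !S_INR in E1, E2.
  split; lra.
Qed.

Section Subleading.

Variables (p q mu Gam gam : R).
Hypotheses (Hp : 1 < p) (Hq : 1 < q) (HGam : 0 < Gam) (Hgam : 0 < gam)
  (Hgam_p : Rpower gam p = Gam * ((p + 1) / (p * q - 1)))
  (HGam_q : Rpower Gam q = gam * ((q + 1) / (p * q - 1))).

Lemma subleading_eqs_explicit (lam r a0 b0 a1 b1 : R) :
  subleading_eqs p q mu Gam gam lam r a0 b0 a1 b1 <->
  (r + 2) * (r + 1) * a0
    - (r / 2 + (p + 1) / (p * q - 1) + lam) * (a1 - (r + 2) * (r + 1) * a0)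
    + p * (Gam * ((p + 1) / (p * q - 1)) / gam) * (b1 - (r + 2) * (r + 1) * mu * b0) = 0 /\
  mu * ((r + 2) * (r + 1) * b0)
    + q * (gam * ((q + 1) / (p * q - 1)) / Gam) * (a1 - (r + 2) * (r + 1) * a0)
    - (r / 2 + (q + 1) / (p * q - 1) + lam) * (b1 - (r + 2) * (r + 1) * mu * b0) = 0.
Proof. unfold subleading_eqs. now rewrite !Rpower_pred, Hgam_p, HGam_q by assumption. Qed.

Lemma subleading_eqs_solve (lam r a0 b0 a1 b1 a1' b1' : R) :
  (r / 2 + (p + 1) / (p * q - 1) + lam) * (r / 2 + (q + 1) / (p * q - 1) + lam)
    - (p + 1) * (q + 1) * p * q / ((p * q - 1) * (p * q - 1)) <> 0 ->
  subleading_eqs p q mu Gam gam lam r a0 b0 a1 b1 ->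
  subleading_eqs p q mu Gam gam lam r a0 b0 a1' b1' ->
  a1 = a1' /\ b1 = b1'.
Proof.
  intros Hdet [E1 E2]%subleading_eqs_explicit [E1' E2']%subleading_eqs_explicit.
  apply (linear2_unique (- (r / 2 + (p + 1) / (p * q - 1) + lam))
           (p * (Gam * ((p + 1) / (p * q - 1)) / gam))
           (q * (gam * ((q + 1) / (p * q - 1)) / Gam)) (- (r / 2 + (q + 1) / (p * q - 1) + lam))).
  - replace (_ - _) with ((r / 2 + (p + 1) / (p * q - 1) + lam) * (r / 2 + (q + 1) / (p * q - 1) + lam)
      - (p + 1) * (q + 1) * p * q / ((p * q - 1) * (p * q - 1))); [exact Hdet|].
    field. repeat split; try lra. nra.
  - lra.
  - lra.
Qed.

Lemma subleading_coef_f (f g : nat -> R -> R) (a b : nat -> nat -> R) :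
  hh_expansions mu f g a b -> (forall n, eigenpair p q mu Gam gam (1 - INR n / 2) (f n) (g n)) ->
  (forall m, a m 0%nat = (p + 1) * Gam) -> (forall m, b m 0%nat = (q + 1) * gam) ->
  forall n,
    a (S (S n)) 1%nat = (INR n + 2) * (INR n + 1) * (1 - mu) * p * Gam /\
    b (S (S n)) 1%nat = - ((INR n + 2) * (INR n + 1) * (1 - mu) * q * gam).
Proof.
  intros Hexp Heig Ha0 Hb0 n.
  pose proof (eigenpair_hh_subleading _ _ _ _ _ _ _ _ _ _ n Hexp (Heig (S (S n)))) as H.
  rewrite Ha0, Hb0 in H. replace (INR (S (S n))) with (INR n + 2) in H by (rewrite !S_INR; ring).
  eapply subleading_eqs_solve; [| exact H |].
  - replace (_ - _) with (- ((p + 1) * (q + 1) / (p * q - 1))) by (field; nra).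
    apply Ropp_neq_0_compat, Rgt_not_eq, Rdiv_lt_0_compat; nra.
  - apply subleading_eqs_explicit. split; field; split; nra.
Qed.

Lemma subleading_coef_ft (f g : nat -> R -> R) (a b : nat -> nat -> R) :
  hh_expansions mu f g a b ->
  (forall n, eigenpair p q mu Gam gam (- (INR n / 2 + (p + 1) * (q + 1) / (p * q - 1))) (f n) (g n)) ->
  (forall m, a m 0%nat = p * Gam) -> (forall m, b m 0%nat = - (q * gam)) ->
  forall n,
    a (S (S n)) 1%nat = (INR n + 2) * (INR n + 1) * (1 - mu) * p * q / (3 * p * q + p + q - 1)
                        * (p + 1) * Gam /\
    b (S (S n)) 1%nat = (INR n + 2) * (INR n + 1) * (1 - mu) * p * q / (3 * p * q + p + q - 1)
                        * (q + 1) * gam.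
Proof.
  intros Hexp Heig Ha0 Hb0 n.
  pose proof (eigenpair_hh_subleading _ _ _ _ _ _ _ _ _ _ n Hexp (Heig (S (S n)))) as H.
  rewrite Ha0, Hb0 in H. replace (INR (S (S n))) with (INR n + 2) in H by (rewrite !S_INR; ring).
  eapply subleading_eqs_solve; [| exact H |].
  - replace (_ - _) with ((3 * p * q + p + q - 1) / (p * q - 1)) by (field; nra).
    apply Rgt_not_eq, Rdiv_lt_0_compat; nra.
  - apply subleading_eqs_explicit. split; field; repeat split; nra.
Qed.

End Subleading.

(** * Inverting the change of basis *)

Lemma hh_comb_lead (s : R) (F : R -> R) (a : nat -> R) (n : nat) (lead : R) :
  (forall y, F y = sum_f_R0 (fun j => a j * hh s (n - 2 * j) y) (Nat.div2 n)) ->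
  poly_deg_lead F n lead -> a 0%nat = lead.
Proof.
  intros HF [c [Hc HFc]]. rewrite <- Hc, <- (hh_comb_coef_top s a n).
  apply (poly_at_coef_unique _ _ n); [|lia].
  intro y. rewrite <- hh_comb_poly_at, <- HF, HFc. reflexivity.
Qed.

Lemma hcomb_lead_coefs (mu lF lG : R) (F G : nat -> R -> R) :
  (forall n, poly_deg_lead (F n) n lF /\ poly_deg_lead (G n) n lG /\ hcomb mu n (F n) (G n)) ->
  exists a b : nat -> nat -> R,
    hh_expansions mu F G a b /\ (forall m, a m 0%nat = lF) /\ (forall m, b m 0%nat = lG).
Proof.
  intro H.
  destruct (functional_choice (fun n ab => forall y,
    F n y = sum_f_R0 (fun j => fst ab j * h (n - 2 * j) y) (n / 2) /\
    G n y = sum_f_R0 (fun j => snd ab j * hh mu (n - 2 * j) y) (n / 2))) as [ab Hab].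
  { intro n. destruct (H n) as [_ [_ [a [b Hab]]]]. now exists (a, b). }
  assert (Hexp : hh_expansions mu F G (fun n => fst (ab n)) (fun n => snd (ab n))).
  { intros n y. rewrite Nat.div2_div. destruct (Hab n y) as [HF HG]. split; [|exact HG].
    rewrite HF. apply sum_eq. intros. now rewrite h_eq_hh. }
  exists (fun n => fst (ab n)), (fun n => snd (ab n)).
  split; [exact Hexp | split]; intro m; eapply hh_comb_lead; try apply Hexp; apply H.
Qed.

(* The block L_{m,i} through which (theta_m, tilde theta_m) enters (Q_{m-2i}, hat Q_{m-2i}). *)
Definition coef_mat (a b a' b' : nat -> nat -> R) (m i : nat) : mat2 :=
  Mat2 (a m i) (a' m i) (b m i) (b' m i).

Lemma expansion_inverse (mu : R) (a b a' b' : nat -> nat -> R) (f g ft gt : nat -> R -> R)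
  (M : nat) (Q Qh th tht : nat -> R) :
  hh_expansions mu f g a b -> hh_expansions mu ft gt a' b' ->
  (forall m, mat2_det (coef_mat a b a' b' m 0) <> 0) ->
  (forall y,
     sum_f_R0 (fun k => Q k * h k y) M = sum_f_R0 (fun n => th n * f n y + tht n * ft n y) M /\
     sum_f_R0 (fun k => Qh k * hh mu k y) M = sum_f_R0 (fun n => th n * g n y + tht n * gt n y) M) ->
  forall n, (n <= M)%nat ->
    (th n, tht n) = vec2_sum (fun j => mat2_app (trinv (coef_mat a b a' b') n j)
                                                (Q (n + 2 * j)%nat, Qh (n + 2 * j)%nat))
                             (Nat.div2 (M - n)).
Proof.
  intros Hfg Hfgt Hdet Hid.
  apply (trinv_solves _ Hdet M (fun m => (th m, tht m)) (fun k => (Q k, Qh k))).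
  intros k Hk. unfold vec2_sum, mat2_app, coef_mat; simpl. f_equal.
  - apply (hh_expansion_coef 1 a a' f ft); [apply Hfg | apply Hfgt | | exact Hk].
    intro y. rewrite <- (proj1 (Hid y)). apply sum_eq. intros. now rewrite h_eq_hh.
  - apply (hh_expansion_coef mu b b' g gt); [apply Hfg | apply Hfgt | apply Hid | exact Hk].
Qed.

Theorem mainTheorem4 (p q mu Gam gam : R) (f g ft gt : nat -> R -> R) :
  1 < p -> 1 < q -> 0 < mu -> 0 < Gam -> 0 < gam ->
  Rpower gam p = Gam * ((p + 1) / (p * q - 1)) ->
  Rpower Gam q = gam * ((q + 1) / (p * q - 1)) ->
  (forall n : nat,
     eigenpair p q mu Gam gam (1 - INR n / 2) (f n) (g n) /\
     poly_deg_lead (f n) n ((p + 1) * Gam) /\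
     poly_deg_lead (g n) n ((q + 1) * gam) /\
     hcomb mu n (f n) (g n)) ->
  (forall n : nat,
     eigenpair p q mu Gam gam
       (- (INR n / 2 + (p + 1) * (q + 1) / (p * q - 1))) (ft n) (gt n) /\
     poly_deg_lead (ft n) n (p * Gam) /\
     poly_deg_lead (gt n) n (- (q * gam)) /\
     hcomb mu n (ft n) (gt n)) ->
  exists A B At Bt : nat -> nat -> R,
    (forall (M : nat) (Q Qh th tht : nat -> R),
       (forall y,
          sum_f_R0 (fun k => Q k * h k y) M
            = sum_f_R0 (fun n => th n * f n y + tht n * ft n y) M /\
          sum_f_R0 (fun k => Qh k * hh mu k y) M
            = sum_f_R0 (fun n => th n * g n y + tht n * gt n y) M) ->
       forall n : nat, (n <= M)%nat ->
         th n = sum_f_R0 (fun j => A (n + 2 * j)%nat n * Q (n + 2 * j)%nat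
                                  + B (n + 2 * j)%nat n * Qh (n + 2 * j)%nat)
                         ((M - n) / 2) /\
         tht n = sum_f_R0 (fun j => At (n + 2 * j)%nat n * Q (n + 2 * j)%nat
                                   + Bt (n + 2 * j)%nat n * Qh (n + 2 * j)%nat)
                          ((M - n) / 2)) /\
    (forall n : nat,
       A n n = q / (Gam * (2 * p * q + p + q)) /\
       B n n = p / (gam * (2 * p * q + p + q)) /\
       A (n + 2)%nat n = - (etilde p q mu gam n / (Gam * gam * (2 * p * q + p + q))) /\
       B (n + 2)%nat n = (p + 1) / (q + 1)
                         * (etilde p q mu gam n / (gam ^ 2 * (2 * p * q + p + q)))).
Proof.
  intros Hp Hq _ HGam Hgam Hgam_p HGam_q Hf Hft.
  destruct (hcomb_lead_coefs mu _ _ f g (fun n => proj2 (Hf n))) as [a [b [Hfg [La Lb]]]].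
  destruct (hcomb_lead_coefs mu _ _ ft gt (fun n => proj2 (Hft n))) as [a' [b' [Hfgt [La' Lb']]]].
  pose proof (subleading_coef_f p q mu Gam gam Hp Hq HGam Hgam Hgam_p HGam_q f g a b Hfg
                (fun n => proj1 (Hf n)) La Lb) as Sf.
  pose proof (subleading_coef_ft p q mu Gam gam Hp Hq HGam Hgam Hgam_p HGam_q ft gt a' b' Hfgt
                (fun n => proj1 (Hft n)) La' Lb') as Sft.
  set (L := coef_mat a b a' b').
  assert (HD : (p + 1) * Gam * - (q * gam) - p * Gam * ((q + 1) * gam) <> 0).
  { replace (_ - _) with (- (Gam * gam * (2 * p * q + p + q))) by ring.
    apply Ropp_neq_0_compat, Rgt_not_eq, Rmult_lt_0_compat; [apply Rmult_lt_0_compat |]; nra. }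
  assert (Hdet : forall m, mat2_det (L m 0%nat) <> 0)
    by (intro m; unfold L, coef_mat, mat2_det; simpl; now rewrite La, Lb, La', Lb').
  set (K := fun m n => trinv L n (Nat.div2 (m - n))).
  exists (fun m n => m11 (K m n)), (fun m n => m12 (K m n)),
         (fun m n => m21 (K m n)), (fun m n => m22 (K m n)).
  split.
  - intros M Q Qh th tht Hid n Hn.
    pose proof (expansion_inverse mu a b a' b' f g ft gt M Q Qh th tht Hfg Hfgt Hdet Hid n Hn) as E.
    unfold vec2_sum, mat2_app in E. simpl in E. injection E as E1 E2.
    rewrite <- Nat.div2_div, E1, E2. unfold K.
    split; apply sum_eq; intros j _; replace (n + 2 * j - n)%nat with (2 * j)%nat by lia;
      now rewrite Nat.div2_double.
  - intro n. destruct (Sf n) as [Ha1 Hb1], (Sft n) as [Ha1' Hb1'].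
    unfold K. rewrite Nat.sub_diag. replace (n + 2 - n)%nat with 2%nat by lia. simpl Nat.div2.
    rewrite trinv_1. replace (n + 2)%nat with (S (S n)) by lia.
    unfold trinv, L, coef_mat, mat2_mul, mat2_opp, mat2_inv, etilde. simpl. unfold mat2_det. simpl.
    rewrite Ha1, Hb1, Ha1', Hb1', !La, !Lb, !La', !Lb'.
    repeat split; field; repeat split; first [exact HD | apply Rgt_not_eq; nra].
Qed.
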